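(* Let $p$ be an odd prime and $b,c\in\mathbb Z$. Then, for every integer $x$, $$(x^2+bx+c)^{p-2}-c^{p-2}\equiv \binom{p-2}{1}_{b,c}x^{p-1}+\binom{p-2}{0}_{b,c}x^{p-2}+\sum_{1<k<p-1}\left(\binom{p-2}{k}_{b,c}+c^{p-1-k}\binom{p-2}{p-1-k}_{b,c}\right)x^{k-1}\pmod p.$$ Equivalently, the two sides are congruent as polynomials in $\mathbb F_p[x]$ modulo $x^p-x$.
   Context: For $n\in\mathbb N$ and $b,c\in\mathbb Z$, the generalized trinomial coefficients $\binom{n}{k}_{b,c}$ ($k\in\mathbb Z$) are the integers defined by the Laurent polynomial identity $\left(x+b+\frac{c}{x}\right)^n=\sum_{k\in\mathbb Z}\binom{n}{k}_{b,c}x^k$; in particular $\binom nk_{b,c}=0$ when $|k|>n$. *)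

From HB Require Import structures.
From mathcomp Require Import all_boot all_order all_algebra.
Set Implicit Arguments. Unset Strict Implicit. Unset Printing Implicit Defensive.
Import Order.TTheory GRing.Theory Num.Theory.
Local Open Scope ring_scope.

(* Generalized trinomial coefficient  binom(n,k)_{b,c}  : the coefficient of
   x^k in the Laurent polynomial (x + b + c/x)^n.  Since
   (x + b + c/x)^n = x^(-n) * (x^2 + b x + c)^n, this is the coefficient of
   x^(n+k) in the ordinary polynomial (x^2 + b x + c)^n when n + k >= 0,
   and 0 when n + k < 0 (also automatically 0 when k > n). *)
Definition trinom (b c : int) (n : nat) (k : int) : int :=
  match (n%:Z + k)%R with
  | Posz m => (('X^2 + b%:P * 'X + c%:P) ^+ n : {poly int})`_m
  | Negz _ => 0
  end.

From HB Require Import structures.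
From mathcomp Require Import all_boot all_order all_algebra.
From mathcomp Require Import finfield zify ring.
Set Implicit Arguments.
Unset Strict Implicit.
Unset Printing Implicit Defensive.

Import Order.TTheory GRing.Theory Num.Theory.
Local Open Scope ring_scope.

(* Put n = p - 2 and T k = binom(n, k)_{b,c}.  Then
   (x^2 + b x + c)^n = \sum_(j <= 2n) T (j - n) x^j.  The Laurent polynomial
   x + b + c/x is invariant under x |-> c/x, whence T (-k) = c^k T k; this
   turns the coefficient of x^(k-1) for 1 < k < p - 1 into
   c^(p-1-k) T (p-1-k), and the constant term T (-n) into c^n.  Modulo p,
   x^p = x folds the high powers x^(n+k) onto x^(k-1). *)

Section LaurentCoef.
Variable R : nzRingType.

Definition coefz (p : {poly R}) (k : int) : R :=
  if k is Posz m then p`_m else 0.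

Lemma coefzD p q k : coefz (p + q) k = coefz p k + coefz q k.
Proof. by case: k => m /=; rewrite ?coefD ?addr0. Qed.

Lemma coefzMC p a k : coefz (p * a%:P) k = coefz p k * a.
Proof. by case: k => m /=; rewrite ?coefMC ?mul0r. Qed.

Lemma coefzMX p k : coefz (p * 'X) k = coefz p (k - 1).
Proof. by case: k => [[|m]|m] /=; rewrite ?coefMX ?subSS ?subn0. Qed.

End LaurentCoef.

Lemma sum_exp_fold (R : comNzSemiRingType) n (y : R) (a : nat -> R) :
  (0 < n)%N -> y ^+ n.+2 = y ->
  \sum_(j < (2 * n).+1) a j * y ^+ j
  = a 0%N + a n.+1 * y ^+ n.+1 + a n * y ^+ n
    + \sum_(2 <= k < n.+1) (a (n + k)%N + a (k - 1)%N) * y ^+ (k - 1).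
Proof.
move=> n_gt0 y_p.
have y_wrap k : (2 <= k)%N -> y ^+ (n + k) = y ^+ (k - 1).
  move=> k_ge2; rewrite (_ : n + k = n.+2 + (k - 2))%N; last by lia.
  by rewrite exprD y_p -exprS; congr (_ ^+ _); lia.
rewrite -(big_mkord xpredT (fun j => a j * y ^+ j)) big_ltn // expr0 mulr1.
rewrite (big_cat_nat _ (n := n)) //=; last by lia.
rewrite (@big_ltn _ _ _ n); last by lia.
rewrite (@big_ltn _ _ _ n.+1); last by lia.
have low : \sum_(1 <= j < n) a j * y ^+ j
           = \sum_(2 <= k < n.+1) a (k - 1)%N * y ^+ (k - 1).
  by rewrite [RHS]big_add1 /=; apply: eq_bigr => k _; rewrite subn1.
have high : \sum_(n.+2 <= j < (2 * n).+1) a j * y ^+ j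
            = \sum_(2 <= k < n.+1) a (n + k)%N * y ^+ (k - 1).
  rewrite -[n.+2]/(2 + n)%N big_addn (_ : ((2 * n).+1 - n = n.+1)%N); last by lia.
  by apply: eq_big_nat => k /andP [k_ge2 _]; rewrite addnC y_wrap.
under [X in _ = _ + X]eq_bigr do rewrite mulrDl.
rewrite big_split /= low high; ring.
Qed.

Section Trinomial.
Variables b c : int.
Local Notation s := ('X^2 + b%:P * 'X + c%:P : {poly int}).
Local Notation T := (trinom b c).

Lemma trinom_coefz n k : T n k = coefz (s ^+ n) (n%:Z + k).
Proof. by []. Qed.

Lemma trinom0n k : T 0 k = (k == 0)%:R.
Proof. by case: k => [[|m]|m]; rewrite trinom_coefz /= ?coef1. Qed.

Lemma trinomS n k : T n.+1 k = T n (k - 1) + b * T n k + c * T n (k + 1).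
Proof.
rewrite !trinom_coefz exprSr; set q := s ^+ n.
rewrite !mulrDr expr2 !mulrA !coefzD !coefzMX !coefzMC.
rewrite (mulrC b) (mulrC c).
by congr (coefz q _ + coefz q _ * _ + coefz q _ * _); lia.
Qed.

Lemma trinom_gt n k : n%:Z < k -> T n k = 0.
Proof.
elim: n k => [|n IH] k hk; first by rewrite trinom0n gt_eqF.
by rewrite trinomS !IH ?mulr0 ?addr0 //; lia.
Qed.

Lemma trinom_diag n : T n n = 1.
Proof.
elim: n => [|n IH]; first by rewrite trinom0n.
rewrite trinomS (_ : n.+1%:Z - 1 = n); last by lia.
by rewrite IH !trinom_gt ?mulr0 ?addr0 //; lia.
Qed.

Lemma trinomN n (k : nat) : T n (- k%:Z) = c ^+ k * T n k.
Proof.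
elim: n k => [|n IH] [|k]; rewrite ?oppr0 ?expr0 ?mul1r //.
  by rewrite !trinom0n mulr0.
rewrite !trinomS (_ : - k.+1%:Z - 1 = - k.+2%:Z); last by lia.
rewrite (_ : - k.+1%:Z + 1 = - k%:Z); last by lia.
rewrite (_ : k.+1%:Z - 1 = k); last by lia.
rewrite (_ : k.+1%:Z + 1 = k.+2); last by lia.
rewrite !IH !exprS; ring.
Qed.

Lemma coef_trinom n j : (s ^+ n)`_j = T n (j%:Z - n%:Z).
Proof. by rewrite trinom_coefz [n%:Z + _]addrCA subrr addr0. Qed.

Lemma trinom_horner (R : comNzRingType) n (y : R) :
  (y ^+ 2 + b%:~R * y + c%:~R) ^+ n
  = \sum_(j < (2 * n).+1) (T n (j%:Z - n%:Z))%:~R * y ^+ j.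
Proof.
have -> : (y ^+ 2 + b%:~R * y + c%:~R) ^+ n = (map_poly intr (s ^+ n)).[y].
  by rewrite rmorphXn /= horner_exp !rmorphD !rmorphM /= !map_polyC map_polyX !hornerE.
rewrite (@horner_coef_wide _ (2 * n).+1); last first.
  by apply/leq_sizeP => j hj; rewrite coef_map_id0 // coef_trinom trinom_gt //; lia.
by apply: eq_bigr => j _; rewrite coef_map_id0 // coef_trinom.
Qed.

Lemma trinom_fold (R : comNzRingType) (p : nat) (y : R) :
  (2 < p)%N -> y ^+ p = y ->
  (y ^+ 2 + b%:~R * y + c%:~R) ^+ (p - 2) - c%:~R ^+ (p - 2)
  = (T (p - 2) 1)%:~R * y ^+ (p - 1) + (T (p - 2) 0)%:~R * y ^+ (p - 2)
    + \sum_(2 <= k < p - 1)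
        ((T (p - 2) k%:Z)%:~R + c%:~R ^+ (p - 1 - k) * (T (p - 2) (p - 1 - k)%:Z)%:~R)
        * y ^+ (k - 1).
Proof.
move=> p_gt2 y_p; have [n def_p] : exists n, p = n.+2 by exists (p - 2)%N; lia.
have n_gt0 : (0 < n)%N by lia.
subst p; rewrite subn2 subn1 /=.
rewrite trinom_horner (sum_exp_fold (fun j => (T n (j%:Z - n%:Z))%:~R)) //=.
rewrite sub0r trinomN trinom_diag mulr1 rmorphXn subrr (_ : n.+1%:Z - n%:Z = 1); last by lia.
under eq_big_nat => k /andP [k_ge2 k_le].
  rewrite (_ : (n + k)%N%:Z - n%:Z = k); last by lia.
  rewrite (_ : (k - 1)%N%:Z - n%:Z = - (n.+1 - k)%N%:Z); last by lia.
  rewrite trinomN rmorphM rmorphXn.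
  over.
by rewrite /=; ring.
Qed.
End Trinomial.

Theorem lemma2p2 (p : nat) (b c : int) :
  prime p -> odd p ->
  forall x : int,
    ((x ^+ 2 + b * x + c) ^+ (p - 2) - c ^+ (p - 2)
     == trinom b c (p - 2) 1 * x ^+ (p - 1)
        + trinom b c (p - 2) 0 * x ^+ (p - 2)
        + \sum_(2 <= k < p - 1)
            (trinom b c (p - 2) k%:Z
             + c ^+ (p - 1 - k) * trinom b c (p - 2) (p - 1 - k)%:Z)
            * x ^+ (k - 1)
     %[mod p%:Z])%Z.
Proof.
move=> p_prime p_odd x.
have p_gt2 : (2 < p)%N.
  by move: (prime_gt1 p_prime) p_odd; case: (p) => [|[|[|]]].
rewrite eqz_mod_dvd (dvdz_pcharf (pchar_Fp p_prime)) rmorphB subr_eq0 /=.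
rewrite rmorphB !rmorphXn !rmorphD !rmorphM !rmorphXn rmorph_sum /=.
under eq_bigr do rewrite rmorphM rmorphD rmorphM !rmorphXn.
apply/eqP/trinom_fold => //.
by rewrite -[in X in _ ^+ X](card_Fp p_prime) expf_card.
Qed.
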